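(* Let $H={\rm SL}_q(N)$ with CQT structure $\sigma$ as in the context, and in $H^0$ put ${\bf l}_{ij}=\sigma(-,x_{ij})$, ${\bf r}_{ij}=\sigma(x_{ij},-)$. Then ${\bf l}_{ii}={\bf r}_{ii}$ is an invertible grouplike element of $H^0$. Define for $1\le i\le N$, $1\le s\le N-1$: $\widehat K_i={\bf l}_{ii}$, $E_s={\bf l}_{s+1,s+1}^{-1}{\bf l}_{s+1,s}$, $F_s=(q-q^{-1})^{-2}{\bf r}_{ss}^{-1}{\bf r}_{s,s+1}$. Then the Hopf algebra $H_l=\{\sigma(-,x)\mid x\in H\}$ is generated as an algebra by the $\widehat K_i^{\pm1}$ and the $E_s$, and these satisfy $\widehat K_i\widehat K_j=\widehat K_j\widehat K_i$, $\widehat K_i\widehat K_i^{-1}=\widehat K_i^{-1}\widehat K_i=\varepsilon$, $\widehat K_1\widehat K_2\cdots\widehat K_N=\varepsilon$, $\widehat K_iE_t\widehat K_i^{-1}=q^{\delta_{i,t}-\delta_{i,t+1}}E_t$, $E_tE_s=E_sE_t$ if $|s-t|>1$, and $E_s^2E_t-(q+q^{-1})E_sE_tE_s+E_tE_s^2=0$ if $|s-t|=1$. Similarly $H_r=\{\sigma(x,-)\mid x\in H\}$ is generated as an algebra by the $\widehat K_i^{\pm1}$ and the $F_s$, which satisfy the same relations among the $\widehat K_i$, and $\widehat K_iF_t\widehat K_i^{-1}=q^{\delta_{i,t+1}-\delta_{i,t}}F_t$, $F_tF_s=F_sF_t$ if $|s-t|>1$, $F_s^2F_t-(q+q^{-1})F_sF_tF_s+F_tF_s^2=0$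 if $|s-t|=1$.
   Context: $k$ is a field, $q\in k$ with $q\neq0$ and $q^2\neq1$, $N\ge2$, $z\in k$ with $z^N=q^{-1}$. ${\rm SL}_q(N)$ is the Hopf algebra generated by $x_{ij}$ ($1\le i,j\le N$) with relations $x_{im}x_{in}=qx_{in}x_{im}$ ($n<m$), $x_{jm}x_{im}=qx_{im}x_{jm}$ ($i<j$), $x_{jn}x_{im}=x_{im}x_{jn}$ ($i<j$, $n<m$), $x_{jm}x_{in}-x_{in}x_{jm}=(q-q^{-1})x_{im}x_{jn}$ ($i<j$, $n<m$), $\sum_{p\in S_N}(-q)^{-l(p)}x_{1p(1)}\cdots x_{Np(N)}=1$, comultiplication $\Delta(x_{ij})=\sum_kx_{ik}\otimes x_{kj}$, counit $\varepsilon(x_{ij})=\delta_{ij}$. $\sigma$ is its CQT structure (a convolution invertible skew pairing $H\otimes H\to k$ with $\sigma(hh',g)=\sigma(h,g_1)\sigma(h',g_2)$, $\sigma(g,hh')=\sigma(g_2,h)\sigma(g_1,h')$, $\sigma(1,h)=\sigma(h,1)=\varepsilon(h)$, $\sigma(h_1,h'_1)h_2h'_2=h'_1h_1\sigma(h_2,h'_2)$) determined by $\sigma(x_{im},x_{jn})=z\big(q^{\delta_{ij}}\delta_{mi}\delta_{nj}+[j>i](q-q^{-1})\delta_{mj}\delta_{ni}\big)$, $[j>i]\in\{0,1\}$ the indicator of $j>i$. $H^0$ is the finite dual; products in $H^0$ are convolution products. *)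

(* Encoding of SL_q(N), its CQT structure and the finite dual
   via the free algebra on generators x_ij (words = monomials basis). *)
From HB Require Import structures.
From mathcomp Require Import all_boot all_order all_algebra all_fingroup.
Set Implicit Arguments. Unset Strict Implicit. Unset Printing Implicit Defensive.
Import Order.TTheory GRing.Theory Num.Theory.
Local Open Scope ring_scope.

Fixpoint allP (T : Type) (P : T -> Prop) (s : seq T) : Prop :=
  match s with [::] => True | x :: s' => P x /\ allP P s' end.

Section Words.
Variable N : nat.
(* generator x_ij is the pair (i,j); monomials of the free algebra are words *)
Definition gen := ('I_N * 'I_N)%type.
Definition word := seq gen.

(* Delta(x_{a1 b1} ... x_{am bm}) = sum_k x_{a1 k1}..x_{am km} (x) x_{k1 b1}..x_{km bm} *)
Fixpoint delta (w : word) : seq (word * word) :=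
  match w with
  | [::] => [:: ([::], [::])]
  | a :: w' => [seq ((a.1, c) :: p.1, (c, a.2) :: p.2) | c <- enum 'I_N, p <- delta w']
  end.

Definition inv_count (p : {perm 'I_N}) : nat :=
  #|[set ij : 'I_N * 'I_N | (ij.1 < ij.2)%N && (p ij.2 < p ij.1)%N]|.
End Words.

Section Alg.
Variables (k : fieldType) (N : nat).
Local Notation word := (word N).

(* elements of the free algebra: finite formal linear combinations of words *)
Definition lincomb := seq (k * word).
(* linear functionals on the free algebra = functions on the word basis *)
Definition fn := word -> k.
(* bilinear forms on the free algebra *)
Definition bf := word -> word -> k.

Definition coef (x : lincomb) (w : word) : k := \sum_(p <- x | p.2 == w) p.1.
Definition lc_eq (x y : lincomb) : Prop := forall w, coef x w = coef y w.
Definition lscale (c : k) (x : lincomb) : lincomb := [seq (c * p.1, p.2) | p <- x].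
Definition lmul (u : word) (x : lincomb) : lincomb := [seq (p.1, u ++ p.2) | p <- x].
Definition rmul (x : lincomb) (v : word) : lincomb := [seq (p.1, p.2 ++ v) | p <- x].
Definition lcsub (x y : lincomb) : lincomb := x ++ lscale (-1) y.

(* the quantum determinant relation  sum_p (-q)^{-l(p)} x_{1p(1)}...x_{Np(N)} - 1 *)
Definition det_lc (q : k) : lincomb :=
  (-1, [::]) ::
  [seq (((- q)^-1) ^+ inv_count p, [seq (i, p i) | i <- enum 'I_N]) | p <- enum {perm 'I_N}].

(* the defining relations of SL_q(N), written as "lhs - rhs" *)
Definition is_rel (q : k) (r : lincomb) : Prop :=
     (exists i m n : 'I_N, (n < m)%N /\
        r = [:: (1, [:: (i, m); (i, n)]); (- q, [:: (i, n); (i, m)])])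
  \/ (exists i j m : 'I_N, (i < j)%N /\
        r = [:: (1, [:: (j, m); (i, m)]); (- q, [:: (i, m); (j, m)])])
  \/ (exists i j m n : 'I_N, (i < j)%N /\ (n < m)%N /\
        r = [:: (1, [:: (j, n); (i, m)]); (-1, [:: (i, m); (j, n)])])
  \/ (exists i j m n : 'I_N, (i < j)%N /\ (n < m)%N /\
        r = [:: (1, [:: (j, m); (i, n)]); (-1, [:: (i, n); (j, m)]);
                (- (q - q^-1), [:: (i, m); (j, n)])])
  \/ r = det_lc q.

(* membership in the two-sided ideal I generated by the relations;
   SL_q(N) = free algebra / I *)
Definition inI (q : k) (x : lincomb) : Prop :=
  exists t : seq (k * word * lincomb * word),
    allP (fun e => is_rel q e.1.2) t /\
    lc_eq x (flatten [seq lscale e.1.1.1 (lmul e.1.1.2 (rmul e.1.2 e.2)) | e <- t]).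

Definition fext (f : fn) (x : lincomb) : k := \sum_(p <- x) p.1 * f p.2.

(* f is a linear functional on H = SL_q(N) (i.e. vanishes on I) *)
Definition onH (q : k) (f : fn) : Prop := forall x, inI q x -> fext f x = 0.

(* J (a subset of the free algebra containing I) is a two-sided ideal;
   such J correspond exactly to ideals of H *)
Definition is_ideal (J : lincomb -> Prop) : Prop :=
  J [::] /\ (forall x y, J x -> lc_eq x y -> J y) /\
  (forall x y, J x -> J y -> J (x ++ y)) /\
  (forall c x, J x -> J (lscale c x)) /\
  (forall u x v, J x -> J (lmul u (rmul x v))).

(* f belongs to the finite dual H^0: f is a functional on H whose kernel
   contains an ideal of H of finite codimension *)
Definition finite_dual (q : k) (f : fn) : Prop :=
  onH q f /\
  exists J : lincomb -> Prop,
    is_ideal J /\ (forall x, inI q x -> J x) /\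
    (exists B : seq word, forall w, exists x : lincomb,
        allP (fun p => p.2 \in B) x /\ J (lcsub [:: (1, w)] x)) /\
    (forall x, J x -> fext f x = 0).

(* counit of H = unit of H^0 *)
Definition eps : fn := fun w => \prod_(a <- w) ((a.1 == a.2)%:R : k).
Definition conv (f g : fn) : fn := fun w => \sum_(p <- delta w) f p.1 * g p.2.
Definition convprod (fs : seq fn) : fn := foldr conv eps fs.

(* grouplike in H^0: Delta f = f (x) f and eps(f) = 1, i.e. f is multiplicative
   and unital *)
Definition grouplike (f : fn) : Prop :=
  f [::] = 1 /\ forall u v, f (u ++ v) = f u * f v.

Definition gen_by (G : fn -> Prop) (f : fn) : Prop :=
  exists t : seq (k * seq fn),
    allP (fun p => allP G p.2) t /\
    forall w, f w = \sum_(p <- t) p.1 * convprod p.2 w.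

Definition sigL (s : bf) (x : lincomb) : fn := fun w => \sum_(p <- x) p.1 * s w p.2.
Definition sigR (s : bf) (x : lincomb) : fn := fun w => \sum_(p <- x) p.1 * s p.2 w.
Definition lfun (s : bf) (i j : 'I_N) : fn := fun w => s w [:: (i, j)].
Definition rfun (s : bf) (i j : 'I_N) : fn := fun w => s [:: (i, j)] w.

(* s is a bilinear form on H (descends to the quotient in each argument) *)
Definition descends (q : k) (s : bf) : Prop :=
  (forall w, onH q (fun u => s u w)) /\ (forall w, onH q (fun u => s w u)).

Definition skew_pairing (s : bf) : Prop :=
  (forall u v w, s (u ++ v) w = \sum_(p <- delta w) s u p.1 * s v p.2) /\
  (forall u v w, s w (u ++ v) = \sum_(p <- delta w) s p.2 u * s p.1 v) /\
  (forall w, s [::] w = eps w) /\ (forall w, s w [::] = eps w).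

Definition conv2 (s t : bf) : bf := fun a b =>
  \sum_(p <- delta a) \sum_(p' <- delta b) s p.1 p'.1 * t p.2 p'.2.

Definition conv_invertible (q : k) (s : bf) : Prop :=
  exists t : bf, descends q t /\
    (forall a b, conv2 s t a b = eps a * eps b) /\
    (forall a b, conv2 t s a b = eps a * eps b).

(* sigma(h1,h'1) h2 h'2 = h'1 h1 sigma(h2,h'2) in H *)
Definition braided (q : k) (s : bf) : Prop :=
  forall a b, inI q (lcsub
     [seq (s p.1 p'.1, p.2 ++ p'.2) | p <- delta a, p' <- delta b]
     [seq (s p.2 p'.2, p'.1 ++ p.1) | p <- delta a, p' <- delta b]).

Definition sigma_gen (q z : k) (s : bf) : Prop :=
  forall i m j n : 'I_N, s [:: (i, m)] [:: (j, n)] =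
    z * (q ^+ (i == j) * ((m == i) && (n == j))%:R
         + (i < j)%N%:R * (q - q^-1) * ((m == j) && (n == i))%:R).

Definition CQT (q z : k) (s : bf) : Prop :=
  descends q s /\ skew_pairing s /\ conv_invertible q s /\ braided q s /\
  sigma_gen q z s.

End Alg.
Arguments eps {k N}.

(* Under convolution the functionals on H form an algebra in which
   sigma(-, u v) = sigma(-, v) sigma(-, u) and sigma(u v, -) = sigma(u, -) sigma(v, -),
   so H_l and H_r are spanned by products of the l_ij, resp. r_ij, and every defining
   relation of SL_q(N) becomes a q-commutation relation between them.  On generators
   sigma makes (l_ij) lower and (r_ij) upper triangular, with common diagonal the
   characters K_i : x_ab |-> [a = b] z q^[a = i]; as z^N = q^-1, the product of all K_i
   is the counit, so K_i^-1 is the product of the other K_j and lies in H_l and in H_r.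
   The relations of 2 x 2 minors give the weights of K_i on l_(s+1,s) and the identity
   [l_cb, l_ac] = (q - q^-1) l_ab K_c for b < c < a; taking c = b + 1 and inducting on
   a - b, every l_ab is generated by the E_s and the K_i^(+-1).  Commuting that identity
   once more with l_(s+1,s) gives a Serre relation for l_(s+1,s), l_(s+2,s+1), and the
   factors K^-1 in E_s, E_(s+1) rescale its three terms by the same amount.  The case of
   H_r is symmetric. *)
From Pilot Require Import Defs.
From HB Require Import structures.
From mathcomp Require Import all_boot all_order all_algebra all_fingroup.
From mathcomp Require Import boolp ring zify.
Set Implicit Arguments. Unset Strict Implicit. Unset Printing Implicit Defensive.
Import Order.TTheory GRing.Theory Num.Theory.
Local Open Scope ring_scope.
Arguments delta : simpl never.

Lemma ord_ltn_neq (N : nat) (i j : 'I_N) : (i < j)%N -> i != j.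
Proof. by move/ltn_eqF/negbT. Qed.
Lemma ord_gtn_neq (N : nat) (i j : 'I_N) : (i < j)%N -> j != i.
Proof. by move=> ij; rewrite eq_sym ord_ltn_neq. Qed.

Section QCommutation.
Variables (k : fieldType) (R : algType k).

Lemma qcomm_inv (u v A : R) (c : k) :
  u * v = 1 -> v * u = 1 -> c != 0 -> u * A = c *: (A * u) -> v * A = c^-1 *: (A * v).
Proof.
move=> uv vu c0 uA; have -> : A * v = c *: (v * A).
  by rewrite -[A * v]mul1r -vu -mulrA (mulrA u) uA -scalerAl -scalerAr -!mulrA uv mulr1.
by rewrite scalerA mulVf // scale1r.
Qed.

Definition serre (x y w : k) (X Y : R) : R :=
  x *: (X * (X * Y)) - y *: (X * (Y * X)) + w *: (Y * (X * X)).

Lemma serre_eq0_scale (l x y w x' y' w' : k) (X Y : R) : serre x y w X Y = 0 ->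
  x' = l * x -> y' = l * y -> w' = l * w -> serre x' y' w' X Y = 0.
Proof.
by move=> e -> -> ->; rewrite /serre -!scalerA -scalerBr -scalerDr -/(serre x y w X Y) e scaler0.
Qed.

Lemma serreZ (m x y w : k) (X Y : R) :
  serre x y w (m *: X) (m *: Y) = m ^+ 3 *: serre x y w X Y.
Proof.
have mon3 (X1 X2 X3 : R) : (m *: X1) * ((m *: X2) * (m *: X3)) = m ^+ 3 *: (X1 * (X2 * X3)).
  by rewrite -!scalerAl -!scalerAr !scalerA; congr (_ *: _); ring.
by rewrite /serre !mon3 scalerDr scalerBr !scalerA mulrC [_ * y]mulrC [_ * w]mulrC.
Qed.

(* The two Serre expressions are A [A, B] - q^2 [A, B] A and [A, B] B - q^2 B [A, B],
   which vanish because [A, B] = l C K q-commutes with A and with B. *)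
Lemma serre_of_commutator (q l : k) (A B C K : R) : q != 0 ->
  A * B - B * A = l *: (C * K) -> A * C = q *: (C * A) -> C * B = q *: (B * C) ->
  K * A = q^-1 *: (A * K) -> K * B = q *: (B * K) ->
  serre 1 (1 + q ^+ 2) (q ^+ 2) A B = 0 /\ serre (q ^+ 2) (1 + q ^+ 2) 1 B A = 0.
Proof.
move=> q0 hAB hAC hCB hKA hKB; split.
- have -> : serre 1 (1 + q ^+ 2) (q ^+ 2) A B =
            A * (A * B - B * A) - q ^+ 2 *: ((A * B - B * A) * A).
    rewrite /serre mulrBr mulrBl scalerBr !mulrA scalerDl !scale1r.
    by rewrite opprD opprB !addrA [RHS]addrAC.
  have e1 : A * (C * K) = q *: (C * (A * K)) by rewrite mulrA hAC -scalerAl -mulrA.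
  have e2 : C * K * A = q^-1 *: (C * (A * K)) by rewrite -mulrA hKA -scalerAr.
  rewrite hAB -scalerAr -scalerAl e1 e2 !scalerA -scalerBl.
  by rewrite [_ - _](_ : _ = 0) ?scale0r //; field.
- have -> : serre (q ^+ 2) (1 + q ^+ 2) 1 B A =
            (A * B - B * A) * B - q ^+ 2 *: (B * (A * B - B * A)).
    rewrite /serre mulrBr mulrBl scalerBr !mulrA scalerDl !scale1r.
    by rewrite opprD opprB !addrA [LHS]addrC !addrA [X in _ = X - _]addrAC.
  have e3 : C * K * B = q ^+ 2 *: (B * (C * K)).
    by rewrite -mulrA hKB -scalerAr [C * (B * K)]mulrA hCB -scalerAl -mulrA scalerA -expr2.
  by rewrite hAB -scalerAl -scalerAr e3 !scalerA mulrC subrr.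
Qed.

Section Twist.
Variables (u v A B : R) (a b c d : k).
Hypotheses (uA : u * A = a *: (A * u)) (uB : u * B = b *: (B * u)).
Hypotheses (vA : v * A = c *: (A * v)) (vB : v * B = d *: (B * v)) (uv : u * v = v * u).

Let push (t X : R) (e : k) : t * X = e *: (X * t) -> forall Z, t * (X * Z) = e *: (X * (t * Z)).
Proof. by move=> tX Z; rewrite mulrA tX -scalerAl -mulrA. Qed.

Let vu Z : v * (u * Z) = u * (v * Z).
Proof. by rewrite mulrA -uv -mulrA. Qed.

Ltac normalize_units :=
  rewrite -!mulrA; repeat first
    [ rewrite (push uA) | rewrite (push uB) | rewrite (push vA) | rewrite (push vB)
    | rewrite uA | rewrite uB | rewrite vA | rewrite vB | rewrite vu | rewrite -uv
    | rewrite -scalerAr | rewrite scalerA ].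

Lemma serre_twist (x y w : k) : serre x y w (u * A) (v * B) =
  (a ^+ 3 * d) *: (serre (x * b ^+ 2) (y * (b * c)) (w * c ^+ 2) A B * (u * (u * v))).
Proof.
rewrite /serre mulrDl mulrBl -!scalerAl scalerDr scalerBr !scalerA.
by normalize_units; congr (_ *: _ - _ *: _ + _ *: _); ring.
Qed.
End Twist.
End QCommutation.

Section ConvolutionAlgebra.
Variables (k : fieldType) (N : nat).
Local Notation word := (word N).

Lemma sum_delta_nil (F : word * word -> k) : \sum_(p <- delta [::]) F p = F ([::], [::]).
Proof. by rewrite big_cons big_nil addr0. Qed.

Lemma sum_delta_cons (a : gen N) (w : word) (F : word * word -> k) :
  \sum_(p <- delta (a :: w)) F p =
  \sum_(c <- enum 'I_N) \sum_(p <- delta w) F ((a.1, c) :: p.1, (c, a.2) :: p.2).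
Proof. exact: big_allpairs_dep. Qed.

Lemma sum_delta1 (i j : 'I_N) (F : word * word -> k) :
  \sum_(p <- delta [:: (i, j)]) F p = \sum_(c <- enum 'I_N) F ([:: (i, c)], [:: (c, j)]).
Proof. by rewrite sum_delta_cons; apply: eq_bigr => c _; rewrite sum_delta_nil. Qed.

Lemma eps_nil : @eps k N [::] = 1.
Proof. exact: big_nil. Qed.

Lemma eps_cons (a : gen N) (w : word) : @eps k N (a :: w) = (a.1 == a.2)%:R * eps w.
Proof. exact: big_cons. Qed.

Lemma sum_delta_epsl (f : word -> k) w : \sum_(p <- delta w) eps p.1 * f p.2 = f w.
Proof.
elim: w f => [|a w IH] f; first by rewrite sum_delta_nil eps_nil mul1r.
rewrite sum_delta_cons (bigD1_seq a.1) ?enum_uniq ?mem_enum //= [X in _ + X]big1_seq ?addr0.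
  rewrite -[RHS](IH (fun x => f (a :: x))); apply: eq_bigr => p _.
  by rewrite eps_cons eqxx mul1r -surjective_pairing.
move=> c /andP[ne _]; apply: big1 => p _.
by rewrite eps_cons /= eq_sym (negbTE ne) !mul0r.
Qed.

Lemma sum_delta_epsr (f : word -> k) w : \sum_(p <- delta w) f p.1 * eps p.2 = f w.
Proof.
elim: w f => [|a w IH] f; first by rewrite sum_delta_nil eps_nil mulr1.
rewrite sum_delta_cons (bigD1_seq a.2) ?enum_uniq ?mem_enum //= [X in _ + X]big1_seq ?addr0.
  rewrite -[RHS](IH (fun x => f (a :: x))); apply: eq_bigr => p _.
  by rewrite eps_cons eqxx mul1r -surjective_pairing.
move=> c /andP[ne _]; apply: big1 => p _.
by rewrite eps_cons /= (negbTE ne) mul0r mulr0.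
Qed.

Lemma delta_coassoc (w : word) (F : word -> word -> word -> k) :
  \sum_(p <- delta w) \sum_(p' <- delta p.1) F p'.1 p'.2 p.2 =
  \sum_(p <- delta w) \sum_(p' <- delta p.2) F p.1 p'.1 p'.2.
Proof.
elim: w F => [|a w IH] F; first by rewrite !sum_delta_nil.
rewrite !sum_delta_cons.
under eq_bigr do under eq_bigr do rewrite sum_delta_cons.
under [RHS]eq_bigr do under eq_bigr do rewrite sum_delta_cons.
under eq_bigr do rewrite exchange_big.
rewrite exchange_big; under [RHS]eq_bigr do rewrite exchange_big.
apply: eq_bigr => d _; apply: eq_bigr => c _.
exact: (IH (fun x y z => F ((a.1, d) :: x) ((d, c) :: y) ((c, a.2) :: z))).
Qed.

(* Functionals on H are the functionals on the free algebra that vanish on the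
   relations; H^0 sits inside the convolution algebra of all of them. *)
Definition dual : Type := fn k N.
HB.instance Definition _ := Choice.on dual.

Definition dual_add (f g : dual) : dual := fun w => f w + g w.
Definition dual_opp (f : dual) : dual := fun w => - f w.
Definition dual_scale (c : k) (f : dual) : dual := fun w => c * f w.

Lemma dual_addA : associative dual_add.
Proof. by move=> f g h; apply: funext => w; apply: addrA. Qed.
Lemma dual_addC : commutative dual_add.
Proof. by move=> f g; apply: funext => w; apply: addrC. Qed.
Lemma dual_add0 : left_id (fun _ => 0) dual_add.
Proof. by move=> f; apply: funext => w; apply: add0r. Qed.
Lemma dual_addN : left_inverse (fun _ => 0) dual_opp dual_add.
Proof. by move=> f; apply: funext => w; apply: addNr. Qed.
HB.instance Definition _ :=
  GRing.isZmodule.Build dual dual_addA dual_addC dual_add0 dual_addN.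
Lemma dual_addE (f g : dual) w : (f + g) w = f w + g w. Proof. by []. Qed.

Lemma convA : associative (@conv k N).
Proof.
move=> f g h; apply: funext => w; rewrite /conv.
under eq_bigr do rewrite mulr_sumr.
under [RHS]eq_bigr do rewrite mulr_suml.
rewrite -(delta_coassoc w (fun x y z => f x * (g y * h z))).
by apply: eq_bigr => p _; apply: eq_bigr => p' _; rewrite mulrA.
Qed.
Lemma conv_epsl : left_id eps (@conv k N).
Proof. by move=> f; apply: funext => w; apply: sum_delta_epsl. Qed.
Lemma conv_epsr : right_id eps (@conv k N).
Proof. by move=> f; apply: funext => w; apply: sum_delta_epsr. Qed.
Lemma conv_addl : left_distributive (@conv k N) dual_add.
Proof.
move=> f g h; apply: funext => w; rewrite /conv /dual_add -big_split.
by apply: eq_bigr => p _; rewrite mulrDl.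
Qed.
Lemma conv_addr : right_distributive (@conv k N) dual_add.
Proof.
move=> f g h; apply: funext => w; rewrite /conv /dual_add -big_split.
by apply: eq_bigr => p _; rewrite mulrDr.
Qed.
HB.instance Definition _ :=
  GRing.Zmodule_isPzRing.Build dual convA conv_epsl conv_epsr conv_addl conv_addr.
Lemma dual_mulE (f g : dual) : f * g = conv f g. Proof. by []. Qed.
Lemma dual_oneE : (1 : dual) = eps. Proof. by []. Qed.

Lemma eps_neq0 : (eps : dual) != 0.
Proof.
by apply/eqP => /(congr1 (fun f : dual => f [::])); rewrite eps_nil => /eqP; rewrite oner_eq0.
Qed.
HB.instance Definition _ := GRing.PzSemiRing_isNonZero.Build dual eps_neq0.

Lemma dual_scaleA a b f : dual_scale a (dual_scale b f) = dual_scale (a * b) f.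
Proof. by apply: funext => w; apply: mulrA. Qed.
Lemma dual_scale1 : left_id 1 dual_scale.
Proof. by move=> f; apply: funext => w; apply: mul1r. Qed.
Lemma dual_scaleDr : right_distributive dual_scale +%R.
Proof. by move=> c f g; apply: funext => w; apply: mulrDr. Qed.
Lemma dual_scaleDl f : {morph dual_scale^~ f : a b / a + b}.
Proof. by move=> a b; apply: funext => w; apply: mulrDl. Qed.
HB.instance Definition _ := GRing.Zmodule_isLmodule.Build k dual
  dual_scaleA dual_scale1 dual_scaleDr dual_scaleDl.
Lemma dual_scaleE c (f : dual) w : (c *: f) w = c * f w. Proof. by []. Qed.

Lemma dual_scaleAl (a : k) (f g : dual) : a *: (f * g) = (a *: f) * g.
Proof.
apply: funext => w; rewrite dual_scaleE !dual_mulE /conv mulr_sumr.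
by apply: eq_bigr => p _; rewrite mulrA.
Qed.
HB.instance Definition _ := GRing.Lmodule_isLalgebra.Build k dual dual_scaleAl.

Lemma dual_scaleAr (a : k) (f g : dual) : a *: (f * g) = f * (a *: g).
Proof.
apply: funext => w; rewrite dual_scaleE !dual_mulE /conv mulr_sumr.
by apply: eq_bigr => p _; rewrite mulrCA.
Qed.
HB.instance Definition _ := GRing.Lalgebra_isAlgebra.Build k dual dual_scaleAr.

Lemma convprod3 (f g h : dual) : convprod [:: f; g; h] = f * (g * h) :> dual.
Proof. by change (f * (g * (h * 1)) = f * (g * h)); rewrite mulr1. Qed.

Lemma convprod_cat (l1 l2 : seq dual) :
  convprod (l1 ++ l2) = (convprod l1 : dual) * convprod l2.
Proof. by elim: l1 => [|f l IH] /=; rewrite ?mul1r // IH -!dual_mulE mulrA. Qed.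

Definition diagchar (d : 'I_N -> k) : dual :=
  fun w => \prod_(a <- w) (d a.1 * (a.1 == a.2)%:R).

Lemma diagchar_nil d : diagchar d [::] = 1. Proof. exact: big_nil. Qed.
Lemma diagchar_cons d a w : diagchar d (a :: w) = d a.1 * (a.1 == a.2)%:R * diagchar d w.
Proof. exact: big_cons. Qed.
Lemma diagchar_cat d u v : diagchar d (u ++ v) = diagchar d u * diagchar d v.
Proof. exact: big_cat. Qed.

Lemma diagcharM d e : diagchar d * diagchar e = diagchar (fun a => d a * e a).
Proof.
apply: funext => w; rewrite dual_mulE /conv.
elim: w => [|a w IH]; first by rewrite sum_delta_nil !diagchar_nil mulr1.
rewrite sum_delta_cons diagchar_cons -IH mulr_sumr.
rewrite (bigD1_seq a.1) ?enum_uniq ?mem_enum //= [X in _ + X]big1_seq ?addr0.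
  apply: eq_bigr => p _; rewrite !diagchar_cons /= eqxx mulr1.
  by case: eqP => [->|_]; rewrite ?eqxx /=; ring.
move=> c /andP[ne _]; apply: big1 => p _.
by rewrite !diagchar_cons /= eq_sym (negbTE ne) mulr0 !mul0r.
Qed.

Lemma eq_diagchar d e : d =1 e -> diagchar d = diagchar e.
Proof. by move=> de; apply: funext => w; apply: eq_bigr => a _; rewrite de. Qed.

Lemma diagchar1 : diagchar (fun _ => 1) = 1.
Proof. by apply: funext => w; apply: eq_bigr => a _; rewrite mul1r. Qed.

Lemma diagcharC d e : diagchar d * diagchar e = diagchar e * diagchar d.
Proof. by rewrite !diagcharM; apply: eq_diagchar => a; rewrite mulrC. Qed.

Lemma diagchar_grouplike d : grouplike (diagchar d).
Proof. by split=> [|u v]; [apply: diagchar_nil | apply: diagchar_cat]. Qed.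
End ConvolutionAlgebra.

Lemma allP_cat (T : Type) (P : T -> Prop) s1 s2 :
  Defs.allP P s1 -> Defs.allP P s2 -> Defs.allP P (s1 ++ s2).
Proof. by elim: s1 => //= x s IH [px ps] h2; split => //; apply: IH. Qed.

Section GeneratedSubalgebra.
Variables (k : fieldType) (N : nat).
Local Notation dual := (dual k N).
Implicit Types (G P : dual -> Prop) (f g : dual).

Definition lincomb_convprod (t : seq (k * seq dual)) : dual :=
  \sum_(p <- t) p.1 *: (convprod p.2 : dual).

Lemma gen_byE G f :
  gen_by G f <-> exists2 t, Defs.allP (fun p => Defs.allP G p.2) t & f = lincomb_convprod t.
Proof.
have sumE t w : lincomb_convprod t w = \sum_(p <- t) p.1 * convprod p.2 w.
  rewrite /lincomb_convprod; elim: t => [|p t IH]; rewrite ?big_nil //.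
  by rewrite !big_cons dual_addE IH dual_scaleE.
split=> [[t [Gt ft]] | [t Gt ->]]; exists t => //.
by apply: funext => w; rewrite sumE ft.
Qed.

Lemma gen_by0 G : gen_by G (0 : dual).
Proof. by apply/gen_byE; exists [::]; rewrite // /lincomb_convprod big_nil. Qed.

Lemma gen_by1 G : gen_by G (1 : dual).
Proof.
by apply/gen_byE; exists [:: (1, [::])]; rewrite // /lincomb_convprod big_seq1 scale1r.
Qed.

Lemma gen_by_mem G g : G g -> gen_by G g.
Proof.
move=> Gg; apply/gen_byE; exists [:: (1, [:: g])]; first by [].
by rewrite /lincomb_convprod big_seq1 scale1r /= -dual_mulE -dual_oneE mulr1.
Qed.

Lemma gen_byD G f g : gen_by G f -> gen_by G g -> gen_by G (f + g).
Proof.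
move=> /gen_byE[t1 G1 ->] /gen_byE[t2 G2 ->]; apply/gen_byE.
by exists (t1 ++ t2); [apply: allP_cat | rewrite /lincomb_convprod big_cat].
Qed.

Lemma gen_byZ G c f : gen_by G f -> gen_by G (c *: f).
Proof.
move=> /gen_byE[t Gt ->]; apply/gen_byE; exists [seq (c * p.1, p.2) | p <- t].
  by elim: t Gt => //= p t IH [Gp /IH].
rewrite /lincomb_convprod big_map scaler_sumr.
by apply: eq_bigr => p _; rewrite scalerA.
Qed.

Lemma gen_byB G f g : gen_by G f -> gen_by G g -> gen_by G (f - g).
Proof. by move=> Gf Gg; rewrite -scaleN1r; apply/gen_byD/gen_byZ. Qed.

Lemma gen_byM G f g : gen_by G f -> gen_by G g -> gen_by G (f * g).
Proof.
move=> /gen_byE[t1 G1 ->] /gen_byE[t2 G2 ->]; apply/gen_byE.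
exists [seq (p.1 * p'.1, p.2 ++ p'.2) | p <- t1, p' <- t2].
  elim: t1 G1 => //= p t1 IH [Gp G1]; apply: allP_cat; last exact: IH.
  by elim: t2 G2 {IH} => //= p' t2 IH [Gp' G2]; split; [apply: allP_cat | apply: IH].
rewrite /lincomb_convprod big_allpairs_dep mulr_suml; apply: eq_bigr => p _.
rewrite mulr_sumr; apply: eq_bigr => p' _.
by rewrite convprod_cat -scalerAl -scalerAr scalerA.
Qed.

Lemma gen_by_ind G P : P 1 -> (forall f g, P f -> P g -> P (f + g)) ->
  (forall c f, P f -> P (c *: f)) -> (forall f g, P f -> P g -> P (f * g)) ->
  (forall g, G g -> P g) -> forall f, gen_by G f -> P f.
Proof.
move=> P1 PD PZ PM PG f /gen_byE[t Gt ->]; rewrite /lincomb_convprod.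
have P0 : P 0 by rewrite -(scale0r 1); apply: PZ.
elim: t Gt => [_|p t IH /= [Gp Gt]]; first by rewrite big_nil.
rewrite big_cons; apply: PD (IH Gt); apply: PZ.
elim: p.2 Gp => [_|g l IHl /= [Gg Gl]]; first exact: P1.
by rewrite -dual_mulE; apply: PM; [apply: PG | apply: IHl].
Qed.

Definition in_span (phi : word N -> dual) (f : dual) : Prop :=
  exists x : lincomb k N, f = \sum_(p <- x) p.1 *: phi p.2.

Section MultiplicativeSpan.
Variables (phi : word N -> dual) (m : word N -> word N -> word N).
Hypotheses (phi_nil : phi [::] = 1) (phiM : forall u v, phi u * phi v = phi (m u v)).

Lemma in_span_phiZ c u : in_span phi (c *: phi u).
Proof. by exists [:: (c, u)]; rewrite big_seq1. Qed.

Lemma in_span_phi u : in_span phi (phi u).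
Proof. by rewrite -[phi u]scale1r; apply: in_span_phiZ. Qed.

Lemma gen_by_in_span G f : (forall g, G g -> in_span phi g) -> gen_by G f -> in_span phi f.
Proof.
move=> Gspan; apply: (gen_by_ind _ _ _ _ Gspan).
- by rewrite -phi_nil; apply: in_span_phi.
- by move=> _ _ [x ->] [y ->]; exists (x ++ y); rewrite big_cat.
- move=> c _ [x ->]; exists [seq (c * p.1, p.2) | p <- x]; rewrite big_map scaler_sumr.
  by apply: eq_bigr => p _; rewrite scalerA.
move=> _ _ [x ->] [y ->].
exists [seq (p.1 * p'.1, m p.2 p'.2) | p <- x, p' <- y].
rewrite big_allpairs_dep mulr_suml; apply: eq_bigr => p _.
rewrite mulr_sumr; apply: eq_bigr => p' _.
by rewrite -scalerAl -scalerAr scalerA phiM.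
Qed.

Lemma in_span_gen_by G f : (forall u, gen_by G (phi u)) -> in_span phi f -> gen_by G f.
Proof.
move=> Gphi [x ->]; elim: x => [|p x IH]; first by rewrite big_nil; apply: gen_by0.
by rewrite big_cons; apply/gen_byD/IH/gen_byZ.
Qed.
End MultiplicativeSpan.
End GeneratedSubalgebra.

Section SkewPairing.
Variables (k : fieldType) (N : nat) (s : bf k N).
Hypothesis skew : skew_pairing s.
Local Notation word := (word N).
Local Notation dual := (dual k N).

Definition sL (u : word) : dual := fun w => s w u.
Definition sR (u : word) : dual := fun w => s u w.

Lemma sL_cat u v : sL (u ++ v) = sL v * sL u.
Proof.
apply: funext => w; rewrite dual_mulE /conv /sL skew.2.1.
by apply: eq_bigr => p _; rewrite mulrC.
Qed.
Lemma sR_cat u v : sR (u ++ v) = sR u * sR v.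
Proof. by apply: funext => w; rewrite dual_mulE /conv /sR skew.1. Qed.
Lemma sL_nil : sL [::] = 1.
Proof. by apply: funext => w; rewrite /sL skew.2.2.2. Qed.
Lemma sR_nil : sR [::] = 1.
Proof. by apply: funext => w; rewrite /sR skew.2.2.1. Qed.

Lemma lfun_cat i j u v : lfun s i j (u ++ v) = \sum_(c <- enum 'I_N) lfun s i c u * lfun s c j v.
Proof. by rewrite /lfun skew.1 (sum_delta1 i j (fun p => s u p.1 * s v p.2)). Qed.
Lemma rfun_cat i j u v : rfun s i j (u ++ v) = \sum_(c <- enum 'I_N) rfun s c j u * rfun s i c v.
Proof. by rewrite /rfun skew.2.1 (sum_delta1 i j (fun p => s p.2 u * s p.1 v)). Qed.
Lemma lfun_nil i j : lfun s i j [::] = (i == j)%:R.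
Proof. by rewrite /lfun skew.2.2.1 eps_cons eps_nil mulr1. Qed.
Lemma rfun_nil i j : rfun s i j [::] = (i == j)%:R.
Proof. by rewrite /rfun skew.2.2.2 eps_cons eps_nil mulr1. Qed.


Variables (q z : k).
Hypothesis sgen : sigma_gen q z s.

Lemma lfun_letter i j (a : gen N) : lfun s i j [:: a] =
  z * (q ^+ (a.1 == i) * ((a.2 == a.1) && (j == i))%:R
       + (a.1 < i)%N%:R * (q - q^-1) * ((a.2 == i) && (j == a.1))%:R).
Proof. by case: a => a b; rewrite /lfun sgen. Qed.
Lemma rfun_letter i j (a : gen N) : rfun s i j [:: a] =
  z * (q ^+ (i == a.1) * ((j == i) && (a.2 == a.1))%:R
       + (i < a.1)%N%:R * (q - q^-1) * ((j == a.1) && (a.2 == i))%:R).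
Proof. by case: a => a b; rewrite /rfun sgen. Qed.

Lemma lfun_letter_upper (i j : 'I_N) a : (i < j)%N -> lfun s i j [:: a] = 0.
Proof.
move=> ij; rewrite lfun_letter (negbTE (ord_gtn_neq ij)).
case: (eqVneq j a.1) => [ja|_]; last by rewrite !andbF /=; ring.
have -> : (a.1 < i)%N = false by rewrite -ja ltnNge ltnW.
by rewrite andbF /=; ring.
Qed.
Lemma rfun_letter_lower (i j : 'I_N) a : (j < i)%N -> rfun s i j [:: a] = 0.
Proof.
move=> ji; rewrite rfun_letter (negbTE (ord_ltn_neq ji)).
case: (eqVneq j a.1) => [ja|_]; last by rewrite ?andFb ?andbF /=; ring.
have -> : (i < a.1)%N = false by rewrite -ja ltnNge ltnW.
by rewrite andFb /=; ring.
Qed.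

Lemma lfun_upper (i j : 'I_N) w : (i < j)%N -> lfun s i j w = 0.
Proof.
elim: w i j => [|a w IH] i j ij; first by rewrite lfun_nil (negbTE (ord_ltn_neq ij)).
rewrite -cat1s lfun_cat big1_seq // => c _.
case: (leqP c i) => ci; first by rewrite IH ?mulr0 // (leq_ltn_trans ci ij).
by rewrite lfun_letter_upper // mul0r.
Qed.
Lemma rfun_lower (i j : 'I_N) w : (j < i)%N -> rfun s i j w = 0.
Proof.
elim: w i j => [|a w IH] i j ji; first by rewrite rfun_nil (negbTE (ord_gtn_neq ji)).
rewrite -cat1s rfun_cat big1_seq // => c _.
case: (leqP c j) => cj; first by rewrite IH ?mulr0 // (leq_ltn_trans cj ji).
by rewrite rfun_letter_lower // mul0r.
Qed.

Lemma lfun_upper0 (i j : 'I_N) : (i < j)%N -> lfun s i j = 0 :> dual.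
Proof. by move=> ij; apply: funext => w; apply: lfun_upper. Qed.
Lemma rfun_lower0 (i j : 'I_N) : (j < i)%N -> rfun s i j = 0 :> dual.
Proof. by move=> ji; apply: funext => w; apply: rfun_lower. Qed.

Definition Kweight (i a : 'I_N) : k := z * q ^+ (a == i).
Definition K (i : 'I_N) : dual := diagchar (Kweight i).

(* By triangularity only the middle index c = i contributes to l_ii(x_a w). *)
Lemma lfun_diag i : lfun s i i = K i.
Proof.
apply: funext => w; rewrite /K; elim: w => [|a w IH]; first by rewrite lfun_nil eqxx diagchar_nil.
rewrite -cat1s lfun_cat (bigD1_seq i) ?enum_uniq ?mem_enum //= [X in _ + X]big1_seq ?addr0.
  rewrite IH diagchar_cons lfun_letter eqxx andbT /Kweight; congr (_ * _).
  case: (eqVneq i a.1) => [->|nia]; first by rewrite ltnn [a.2 == _]eq_sym /=; ring.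
  by rewrite andbF [a.2 == _]eq_sym /=; ring.
move=> c /andP[nc _]; case: (ltngtP c i) => ci.
- by rewrite (lfun_upper w ci) mulr0.
- by rewrite lfun_letter_upper // mul0r.
- by rewrite (ord_inj ci) eqxx in nc.
Qed.

Lemma rfun_diag i : rfun s i i = K i.
Proof.
apply: funext => w; rewrite /K; elim: w => [|a w IH]; first by rewrite rfun_nil eqxx diagchar_nil.
rewrite -cat1s rfun_cat (bigD1_seq i) ?enum_uniq ?mem_enum //= [X in _ + X]big1_seq ?addr0.
  rewrite IH diagchar_cons rfun_letter eqxx /Kweight; congr (_ * _).
  case: (eqVneq i a.1) => [->|nia]; first by rewrite ltnn [a.2 == _]eq_sym /=; ring.
  by rewrite andFb [a.2 == _]eq_sym /=; ring.
move=> c /andP[nc _]; case: (ltngtP c i) => ci.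
- by rewrite (rfun_lower w ci) mulr0.
- by rewrite rfun_letter_lower // mul0r.
- by rewrite (ord_inj ci) eqxx in nc.
Qed.
End SkewPairing.

Section QuantumMatrixRelations.
Variables (k : fieldType) (N : nat) (q : k) (s : bf k N).
Hypotheses (skew : skew_pairing s) (desc : descends q s).
Local Notation dual := (dual k N).
Local Notation lf i j := (lfun s i j : dual).
Local Notation rf i j := (rfun s i j : dual).

Lemma inI_rel (r : lincomb k N) : is_rel q r -> inI q r.
Proof.
move=> hr; exists [:: (1, [::], r, [::])]; split => //= w.
by rewrite cats0; elim: r {hr} => //= -[c u] r; rewrite /coef !big_cons /= mul1r cats0 => ->.
Qed.

Lemma sL_rel (r : lincomb k N) : is_rel q r -> \sum_(p <- r) p.1 *: sL s p.2 = 0.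
Proof.
move=> /inI_rel /(desc.2 _) fr; apply: funext => w; rewrite -[RHS](fr w) /fext.
by elim: r {fr} => [|p r IH]; rewrite ?big_nil // !big_cons dual_addE IH dual_scaleE.
Qed.

Lemma sR_rel (r : lincomb k N) : is_rel q r -> \sum_(p <- r) p.1 *: sR s p.2 = 0.
Proof.
move=> /inI_rel /(desc.1 _) fr; apply: funext => w; rewrite -[RHS](fr w) /fext.
by elim: r {fr} => [|p r IH]; rewrite ?big_nil // !big_cons dual_addE IH dual_scaleE.
Qed.

Lemma sL_pair a b : sL s [:: a; b] = sL s [:: b] * sL s [:: a].
Proof. exact: (sL_cat skew [:: a]). Qed.
Lemma sR_pair a b : sR s [:: a; b] = sR s [:: a] * sR s [:: b].
Proof. exact: (sR_cat skew [:: a]). Qed.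

(* The relations of a 2 x 2 minor [[a, b], [c, d]] = [[x_in, x_im], [x_jn, x_jm]],
   i < j and n < m, read in H_l (which reverses products) and in H_r. *)
Lemma lfun_row_rel (i m n : 'I_N) : (n < m)%N -> lf i n * lf i m = q *: (lf i m * lf i n).
Proof.
move=> nm; have := sL_rel (r := [:: (1, [:: (i, m); (i, n)]); (- q, [:: (i, n); (i, m)])]).
rewrite !big_cons big_nil /= !sL_pair addr0 scale1r scaleNr => H.
by apply/eqP; rewrite -subr_eq0 H //; left; exists i, m, n.
Qed.

Lemma lfun_col_rel (i j m : 'I_N) : (i < j)%N -> lf i m * lf j m = q *: (lf j m * lf i m).
Proof.
move=> ij; have := sL_rel (r := [:: (1, [:: (j, m); (i, m)]); (- q, [:: (i, m); (j, m)])]).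
rewrite !big_cons big_nil /= !sL_pair addr0 scale1r scaleNr => H.
by apply/eqP; rewrite -subr_eq0 H //; right; left; exists i, j, m.
Qed.

Lemma lfun_ad_rel (i j m n : 'I_N) : (i < j)%N -> (n < m)%N ->
  lf i n * lf j m - lf j m * lf i n = (q - q^-1) *: (lf j n * lf i m).
Proof.
move=> ij nm; have := sL_rel (r := [:: (1, [:: (j, m); (i, n)]); (-1, [:: (i, n); (j, m)]);
                                   (- (q - q^-1), [:: (i, m); (j, n)])]).
rewrite !big_cons big_nil /= !sL_pair addr0 scale1r scaleN1r scaleNr addrA => H.
by apply/eqP; rewrite -subr_eq0 H //; do 3!right; left; exists i, j, m, n.
Qed.

Lemma rfun_row_rel (i m n : 'I_N) : (n < m)%N -> rf i m * rf i n = q *: (rf i n * rf i m).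
Proof.
move=> nm; have := sR_rel (r := [:: (1, [:: (i, m); (i, n)]); (- q, [:: (i, n); (i, m)])]).
rewrite !big_cons big_nil /= !sR_pair addr0 scale1r scaleNr => H.
by apply/eqP; rewrite -subr_eq0 H //; left; exists i, m, n.
Qed.

Lemma rfun_col_rel (i j m : 'I_N) : (i < j)%N -> rf j m * rf i m = q *: (rf i m * rf j m).
Proof.
move=> ij; have := sR_rel (r := [:: (1, [:: (j, m); (i, m)]); (- q, [:: (i, m); (j, m)])]).
rewrite !big_cons big_nil /= !sR_pair addr0 scale1r scaleNr => H.
by apply/eqP; rewrite -subr_eq0 H //; right; left; exists i, j, m.
Qed.

Lemma rfun_ad_rel (i j m n : 'I_N) : (i < j)%N -> (n < m)%N ->
  rf j m * rf i n - rf i n * rf j m = (q - q^-1) *: (rf i m * rf j n).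
Proof.
move=> ij nm; have := sR_rel (r := [:: (1, [:: (j, m); (i, n)]); (-1, [:: (i, n); (j, m)]);
                                   (- (q - q^-1), [:: (i, m); (j, n)])]).
rewrite !big_cons big_nil /= !sR_pair addr0 scale1r scaleN1r scaleNr addrA => H.
by apply/eqP; rewrite -subr_eq0 H //; do 3!right; left; exists i, j, m, n.
Qed.
End QuantumMatrixRelations.

Section FiniteDual.
Variables (k : fieldType) (N : nat) (q : k).
Local Notation word := (word N).

Lemma fext_coef (f : fn k N) (x : lincomb k N) (S : seq word) :
  uniq S -> {subset [seq p.2 | p <- x] <= S} -> fext f x = \sum_(w <- S) coef x w * f w.
Proof.
move=> uS xS; rewrite /fext /coef; under [RHS]eq_bigr do rewrite mulr_suml.
rewrite (exchange_big_dep predT) //=; apply: eq_big_seq => p px; rewrite -big_filter.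
have -> : [seq w <- S | p.2 == w] = [:: p.2].
  rewrite -(filter_pred1_uniq uS (xS _ (map_f _ px))).
  by apply: eq_filter => w; rewrite eq_sym.
by rewrite big_seq1.
Qed.

Lemma fext_lc_eq (f : fn k N) (x y : lincomb k N) : lc_eq x y -> fext f x = fext f y.
Proof.
move=> exy; pose S := undup [seq p.2 | p <- x ++ y]; have uS : uniq S := undup_uniq _.
rewrite (@fext_coef f x S uS) => [|w xw]; last by rewrite mem_undup map_cat mem_cat xw.
rewrite (@fext_coef f y S uS) => [|w yw]; last by rewrite mem_undup map_cat mem_cat yw orbT.
by apply: eq_bigr => w _; rewrite exy.
Qed.

(* The kernel of a character is an ideal of codimension one. *)
Lemma grouplike_finite_dual (f : fn k N) : onH q f -> grouplike f -> finite_dual q f.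
Proof.
move=> fH [f1 fM]; split=> //; exists (fun x => fext f x = 0).
split; last (split; [exact: fH | split=> [|x //]]).
  split; [|split; [|split; [|split]]].
  - exact: big_nil.
  - by move=> x y fx /(fext_lc_eq f) <-.
  - by move=> x y fx fy; rewrite /fext big_cat /= -!/(fext f _) fx fy addr0.
  - move=> c x fx; have -> : fext f (lscale c x) = c * fext f x.
      by rewrite /fext big_map mulr_sumr; apply: eq_bigr => p _; rewrite mulrA.
    by rewrite fx mulr0.
  - move=> u x v fx; have -> : fext f (lmul u (rmul x v)) = f u * fext f x * f v.
      rewrite /fext !big_map mulr_sumr mulr_suml; apply: eq_bigr => p _.
      by rewrite /= !fM; ring.
    by rewrite fx mulr0 mul0r.
exists [:: [::]] => w; exists [:: (f w, [::])]; split => //=.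
by rewrite /lcsub /fext /lscale /= !big_cons big_nil f1 /=; ring.
Qed.
End FiniteDual.

Section CartanPart.
Variables (k : fieldType) (N : nat) (q z : k).
Hypotheses (q0 : q != 0) (zN : z ^+ N = q^-1).
Local Notation dual := (dual k N).
Local Notation K := (@K _ N q z).
Local Notation Kweight := (@Kweight _ N q z).

Definition Kinv (i : 'I_N) : dual := diagchar (fun a => (Kweight i a)^-1).

Lemma Kweight_neq0 i a : Kweight i a != 0.
Proof.
(* z^N = q^-1 forces z != 0 only because N > 0, witnessed by i. *)
rewrite /Kweight mulf_neq0 ?expf_neq0 //; apply/eqP => z0; move/eqP: zN.
by rewrite z0 expr0n (gtn_eqF (leq_ltn_trans (leq0n i) (ltn_ord i))) eq_sym invr_eq0 (negbTE q0).
Qed.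

Lemma K_Kinv i : K i * Kinv i = 1.
Proof. by rewrite diagcharM -diagchar1; apply: eq_diagchar => a; rewrite mulfV ?Kweight_neq0. Qed.
Lemma Kinv_K i : Kinv i * K i = 1.
Proof. by rewrite diagcharM -diagchar1; apply: eq_diagchar => a; rewrite mulVf ?Kweight_neq0. Qed.
Lemma K_comm i j : K i * K j = K j * K i. Proof. exact: diagcharC. Qed.
Lemma Kinv_comm i j : Kinv i * Kinv j = Kinv j * Kinv i. Proof. exact: diagcharC. Qed.
Lemma K_Kinv_comm i j : K i * Kinv j = Kinv j * K i. Proof. exact: diagcharC. Qed.

Lemma prod_Kweight a : \prod_(j <- enum 'I_N) Kweight j a = 1.
Proof.
rewrite big_split /= [X in _ * X](bigD1_seq a) ?enum_uniq ?mem_enum //= eqxx.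
rewrite [X in _ * (_ * X)]big1 => [|j ja]; last by rewrite eq_sym (negbTE ja).
by rewrite big_enum /= prodr_const card_ord zN mulr1 mulVf.
Qed.

Lemma convprod_K : convprod [seq K i | i <- enum 'I_N] = 1 :> dual.
Proof.
suff -> : forall l, convprod [seq K i | i <- l] = diagchar (fun a => \prod_(j <- l) Kweight j a).
  by rewrite -diagchar1; apply: eq_diagchar => a; rewrite prod_Kweight.
elim=> [|j l IH] /=.
  by rewrite -dual_oneE -diagchar1; apply: eq_diagchar => a; rewrite big_nil.
by rewrite IH -dual_mulE diagcharM; apply: eq_diagchar => a; rewrite big_cons.
Qed.

Lemma prod_Kweight_but i a :
  \prod_(j <- enum 'I_N | j != i) Kweight j a = (Kweight i a)^-1.
Proof.
apply: (mulfI (Kweight_neq0 i a)); rewrite mulfV ?Kweight_neq0 // -[RHS](prod_Kweight a).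
by rewrite [RHS](bigD1_seq i) ?enum_uniq ?mem_enum.
Qed.

Variable s : bf k N.
Hypotheses (skew : skew_pairing s) (sgen : sigma_gen q z s).

Lemma sL_diagonal (l : seq 'I_N) :
  sL s [seq (j, j) | j <- l] = diagchar (fun a => \prod_(j <- l) Kweight j a).
Proof.
elim: l => [|j l IH] /=.
  by rewrite sL_nil // -diagchar1; apply: eq_diagchar => a; rewrite big_nil.
rewrite -cat1s sL_cat // IH -[sL s _]/(lfun s j j : dual) (lfun_diag skew sgen) diagcharM.
by apply: eq_diagchar => a; rewrite big_cons mulrC.
Qed.

Lemma sR_diagonal (l : seq 'I_N) :
  sR s [seq (j, j) | j <- l] = diagchar (fun a => \prod_(j <- l) Kweight j a).
Proof.
elim: l => [|j l IH] /=.
  by rewrite sR_nil // -diagchar1; apply: eq_diagchar => a; rewrite big_nil.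
rewrite -cat1s sR_cat // IH -[sR s [:: _]]/(rfun s j j : dual) (rfun_diag skew sgen) diagcharM.
by apply: eq_diagchar => a; rewrite big_cons.
Qed.

Definition Kinv_word (i : 'I_N) : word N := [seq (j, j) | j <- enum 'I_N & j != i].

Lemma Kinv_sL i : Kinv i = sL s (Kinv_word i).
Proof. by rewrite sL_diagonal; apply: eq_diagchar => a; rewrite big_filter prod_Kweight_but. Qed.
Lemma Kinv_sR i : Kinv i = sR s (Kinv_word i).
Proof. by rewrite sR_diagonal; apply: eq_diagchar => a; rewrite big_filter prod_Kweight_but. Qed.
End CartanPart.

Section CartanWeights.
Variables (k : fieldType) (N : nat) (q z : k) (s : bf k N).
Hypotheses (q0 : q != 0) (zN : z ^+ N = q^-1).
Hypotheses (skew : skew_pairing s) (desc : descends q s) (sgen : sigma_gen q z s).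
Local Notation dual := (dual k N).
Local Notation lf i j := (lfun s i j : dual).
Local Notation rf i j := (rfun s i j : dual).
Local Notation K := (@K _ N q z).
Local Notation Kinv := (@Kinv _ N q z).

Definition qweight (i a b : 'I_N) : k := q ^ ((i == b)%:Z - (i == a)%:Z).

Lemma qweightV i a b : (qweight i a b)^-1 = qweight i b a.
Proof. by rewrite /qweight invr_expz opprB. Qed.

Lemma qweight_neq0 i a b : qweight i a b != 0.
Proof. by rewrite expfz_neq0. Qed.


Lemma K_lfun_sub (i a b : 'I_N) : (a : nat) = b.+1 ->
  K i * lf a b = qweight i a b *: (lf a b * K i).
Proof.
move=> ab; have ba : (b < a)%N by rewrite ab.
rewrite /qweight -!(lfun_diag skew sgen).
case: (eqVneq i b) => [->|ib].
  by rewrite (negbTE (ord_ltn_neq ba)) /= subr0 expr1z (lfun_col_rel skew desc _ ba).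
case: (eqVneq i a) => [->|ia].
  by rewrite /= sub0r exprN1 (lfun_row_rel skew desc _ ba) scalerK.
rewrite subrr expr0z scale1r; apply/eqP; rewrite -subr_eq0.
case: (ltngtP i b) => [lib|lbi|eib]; last by rewrite (ord_inj eib) eqxx in ib.
  have lia : (i < a)%N by rewrite ab ltnS ltnW.
  by rewrite (lfun_ad_rel skew desc lia lib) (lfun_upper0 skew sgen lib) mulr0 scaler0.
have lai : (a < i)%N.
  by rewrite ltn_neqAle {2}ab lbi andbT eq_sym; apply: contra ia => /eqP/ord_inj ->.
rewrite -opprB oppr_eq0 (lfun_ad_rel skew desc lai (ltn_trans ba lai)).
by rewrite (lfun_upper0 skew sgen lai) mulr0 scaler0.
Qed.

Lemma K_rfun_super (i a b : 'I_N) : (a : nat) = b.+1 ->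
  K i * rf b a = qweight i b a *: (rf b a * K i).
Proof.
move=> ab; have ba : (b < a)%N by rewrite ab.
rewrite /qweight -!(rfun_diag skew sgen).
case: (eqVneq i a) => [->|ia].
  by rewrite (negbTE (ord_gtn_neq ba)) /= subr0 expr1z (rfun_col_rel skew desc _ ba).
case: (eqVneq i b) => [->|ib].
  by rewrite /= sub0r exprN1 (rfun_row_rel skew desc _ ba) scalerK.
rewrite subrr expr0z scale1r; apply/eqP; rewrite -subr_eq0.
case: (ltngtP i b) => [lib|lbi|eib]; last by rewrite (ord_inj eib) eqxx in ib.
  have lia : (i < a)%N by rewrite ab ltnS ltnW.
  rewrite -opprB oppr_eq0 (rfun_ad_rel skew desc lib lia).
  by rewrite (rfun_lower0 skew sgen lib) mulr0 scaler0.
have lai : (a < i)%N.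
  by rewrite ltn_neqAle {2}ab lbi andbT eq_sym; apply: contra ia => /eqP/ord_inj ->.
rewrite (rfun_ad_rel skew desc (ltn_trans ba lai) lai).
by rewrite (rfun_lower0 skew sgen lai) mulr0 scaler0.
Qed.

Lemma Kinv_lfun_sub (i a b : 'I_N) : (a : nat) = b.+1 ->
  Kinv i * lf a b = qweight i b a *: (lf a b * Kinv i).
Proof.
move=> ab; rewrite -qweightV; apply: qcomm_inv (K_lfun_sub i ab).
- exact: K_Kinv. - exact: Kinv_K. - exact: qweight_neq0.
Qed.

Lemma Kinv_rfun_super (i a b : 'I_N) : (a : nat) = b.+1 ->
  Kinv i * rf b a = qweight i a b *: (rf b a * Kinv i).
Proof.
move=> ab; rewrite -qweightV; apply: qcomm_inv (K_rfun_super i ab).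
- exact: K_Kinv. - exact: Kinv_K. - exact: qweight_neq0.
Qed.
End CartanWeights.

Section ChevalleyGenerators.
Variables (k : fieldType) (N : nat) (q z : k) (s : bf k N).
Hypotheses (q0 : q != 0) (zN : z ^+ N = q^-1).
Hypotheses (skew : skew_pairing s) (desc : descends q s) (sgen : sigma_gen q z s).
Local Notation dual := (dual k N).
Local Notation lf i j := (lfun s i j : dual).
Local Notation rf i j := (rfun s i j : dual).
Local Notation K := (@K _ N q z).
Local Notation Kinv := (@Kinv _ N q z).
Local Notation qweight := (@qweight _ N q).

Lemma qweight_lo (a b : 'I_N) : a != b -> qweight b a b = q.
Proof. by move=> ab; rewrite /qweight eqxx eq_sym (negbTE ab) /= subr0 expr1z. Qed.
Lemma qweight_hi (a b : 'I_N) : a != b -> qweight a a b = q^-1.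
Proof. by move=> ab; rewrite /qweight eqxx (negbTE ab) /= sub0r exprN1. Qed.
Lemma qweight_other (i a b : 'I_N) : i != a -> i != b -> qweight i a b = 1.
Proof. by move=> ia ib; rewrite /qweight (negbTE ia) (negbTE ib) subrr expr0z. Qed.

(* For a = b + 1 these are E_b and F_b of the statement. *)
Definition Eroot (a b : 'I_N) : dual := Kinv a * lf a b.
Definition Froot (a b : 'I_N) : dual := (q - q^-1) ^- 2 *: (Kinv b * rf b a).

Lemma K_Eroot_conj (i a b : 'I_N) : (a : nat) = b.+1 ->
  K i * (Eroot a b * Kinv i) = qweight i a b *: Eroot a b.
Proof.
move=> ab; rewrite /Eroot -!mulrA [K i * _]mulrA K_Kinv_comm -mulrA [K i * _]mulrA.
by rewrite (K_lfun_sub q0 skew desc sgen i ab) -scalerAl -mulrA K_Kinv // mulr1 -scalerAr.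
Qed.

Lemma K_Froot_conj (i a b : 'I_N) : (a : nat) = b.+1 ->
  K i * (Froot a b * Kinv i) = qweight i b a *: Froot a b.
Proof.
move=> ab; rewrite /Froot -scalerAl -scalerAr scalerA mulrC -scalerA; congr (_ *: _).
rewrite -!mulrA [K i * _]mulrA K_Kinv_comm -mulrA [K i * _]mulrA.
by rewrite (K_rfun_super q0 skew desc sgen i ab) -scalerAl -mulrA K_Kinv // mulr1 -scalerAr.
Qed.

Let Kinv_lf := Kinv_lfun_sub q0 zN skew desc sgen.
Let Kinv_rf := Kinv_rfun_super q0 zN skew desc sgen.

Lemma Eroot_comm (a b c d : 'I_N) : (a : nat) = b.+1 -> (c : nat) = d.+1 -> (a < d)%N ->
  Eroot c d * Eroot a b = Eroot a b * Eroot c d.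
Proof.
move=> ab cd ad; have ac : (a < c)%N by rewrite cd ltnS ltnW.
have bd : (b < d)%N by rewrite (leq_trans _ ad) // ab.
have Ka_cd : Kinv a * lf c d = lf c d * Kinv a.
  by rewrite Kinv_lf // qweight_other ?scale1r // ord_ltn_neq // ltnW.
have Kc_ab : Kinv c * lf a b = lf a b * Kinv c.
  by rewrite Kinv_lf // qweight_other ?scale1r // ord_gtn_neq // (ltn_trans _ ac) ?ab.
have ab_cd : lf a b * lf c d = lf c d * lf a b.
  apply/eqP; rewrite -subr_eq0 (lfun_ad_rel skew desc ac bd).
  by rewrite (lfun_upper0 skew sgen ad) mulr0 scaler0.
rewrite /Eroot -!mulrA [lf c d * _]mulrA -Ka_cd -mulrA -ab_cd.
by rewrite [Kinv c * _]mulrA Kinv_comm -mulrA [Kinv c * _]mulrA Kc_ab -mulrA.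
Qed.

Lemma Froot_comm (a b c d : 'I_N) : (a : nat) = b.+1 -> (c : nat) = d.+1 -> (a < d)%N ->
  Froot c d * Froot a b = Froot a b * Froot c d.
Proof.
move=> ab cd ad; have ac : (a < c)%N by rewrite cd ltnS ltnW.
have bd : (b < d)%N by rewrite (leq_trans _ ad) // ab.
have Kb_dc : Kinv b * rf d c = rf d c * Kinv b.
  have bc : (b < c)%N by rewrite (ltn_trans bd) ?cd.
  by rewrite Kinv_rf // (qweight_other (ord_ltn_neq bc) (ord_ltn_neq bd)) scale1r.
have Kd_ba : Kinv d * rf b a = rf b a * Kinv d.
  by rewrite Kinv_rf // (qweight_other (ord_gtn_neq ad) (ord_gtn_neq bd)) scale1r.
have dc_ba : rf d c * rf b a = rf b a * rf d c.
  apply/eqP; rewrite -subr_eq0 (rfun_ad_rel skew desc bd ac).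
  by rewrite (rfun_lower0 skew sgen ad) mulr0 scaler0.
rewrite /Froot -!scalerAl -!scalerAr !scalerA; congr (_ *: _).
rewrite -!mulrA [rf d c * _]mulrA -Kb_dc -mulrA dc_ba.
by rewrite [Kinv d * (_ * _)]mulrA Kinv_comm -mulrA [Kinv d * (_ * _)]mulrA Kd_ba -mulrA.
Qed.

Lemma Eroot_serre (o0 o1 o2 : 'I_N) : (o1 : nat) = o0.+1 -> (o2 : nat) = o1.+1 ->
  serre 1 (q + q^-1) 1 (Eroot o1 o0) (Eroot o2 o1) = 0 /\
  serre 1 (q + q^-1) 1 (Eroot o2 o1) (Eroot o1 o0) = 0.
Proof.
move=> h10 h21; have l01 : (o0 < o1)%N by rewrite h10.
have l12 : (o1 < o2)%N by rewrite h21.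
have l02 := ltn_trans l01 l12.
have K1_10 : lf o1 o1 * lf o1 o0 = q^-1 *: (lf o1 o0 * lf o1 o1).
  by rewrite (lfun_diag skew sgen) (K_lfun_sub q0 skew desc sgen _ h10) qweight_hi ?ord_gtn_neq.
have K1_21 : lf o1 o1 * lf o2 o1 = q *: (lf o2 o1 * lf o1 o1).
  by rewrite (lfun_diag skew sgen) (K_lfun_sub q0 skew desc sgen _ h21) qweight_lo ?ord_gtn_neq.
have [c12 c21] := serre_of_commutator q0
  (lfun_ad_rel skew desc l12 l01) (lfun_col_rel skew desc _ l12)
  (lfun_row_rel skew desc _ l01) K1_10 K1_21.
have K1_21' : Kinv o1 * lf o2 o1 = q^-1 *: (lf o2 o1 * Kinv o1).
  by rewrite Kinv_lf // qweight_hi ?ord_ltn_neq.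
have K2_10 : Kinv o2 * lf o1 o0 = 1 *: (lf o1 o0 * Kinv o2).
  by rewrite Kinv_lf // qweight_other ?ord_gtn_neq.
rewrite /Eroot; split.
- rewrite (serre_twist (Kinv_lf o1 h10) K1_21' K2_10 (Kinv_lf o2 h21) (Kinv_comm q z o1 o2)).
  by rewrite (serre_eq0_scale (l := q ^- 2) c12) ?mul0r ?scaler0 //; field.
rewrite (serre_twist (Kinv_lf o2 h21) K2_10 K1_21' (Kinv_lf o1 h10) (Kinv_comm q z o2 o1)).
by rewrite (serre_eq0_scale (l := q ^- 2) c21) ?mul0r ?scaler0 //; field.
Qed.

Lemma Froot_serre (o0 o1 o2 : 'I_N) : (o1 : nat) = o0.+1 -> (o2 : nat) = o1.+1 ->
  serre 1 (q + q^-1) 1 (Froot o1 o0) (Froot o2 o1) = 0 /\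
  serre 1 (q + q^-1) 1 (Froot o2 o1) (Froot o1 o0) = 0.
Proof.
move=> h10 h21; have l01 : (o0 < o1)%N by rewrite h10.
have l12 : (o1 < o2)%N by rewrite h21.
have l02 := ltn_trans l01 l12.
have K1_12 : rf o1 o1 * rf o1 o2 = q^-1 *: (rf o1 o2 * rf o1 o1).
  by rewrite (rfun_diag skew sgen) (K_rfun_super q0 skew desc sgen _ h21) qweight_hi ?ord_ltn_neq.
have K1_01 : rf o1 o1 * rf o0 o1 = q *: (rf o0 o1 * rf o1 o1).
  by rewrite (rfun_diag skew sgen) (K_rfun_super q0 skew desc sgen _ h10) qweight_lo ?ord_ltn_neq.
have [c21 c12] := serre_of_commutator q0
  (rfun_ad_rel skew desc l01 l12) (rfun_col_rel skew desc _ l01)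
  (rfun_row_rel skew desc _ l12) K1_12 K1_01.
have K0_12 : Kinv o0 * rf o1 o2 = 1 *: (rf o1 o2 * Kinv o0).
  by rewrite Kinv_rf // qweight_other ?ord_ltn_neq.
have K1_01' : Kinv o1 * rf o0 o1 = q^-1 *: (rf o0 o1 * Kinv o1).
  by rewrite Kinv_rf // qweight_hi ?ord_gtn_neq.
rewrite /Froot !serreZ; split.
- rewrite (serre_twist (Kinv_rf o0 h10) K0_12 K1_01' (Kinv_rf o1 h21) (Kinv_comm q z o0 o1)).
  by rewrite (serre_eq0_scale (l := q ^- 2) c12) ?mul0r ?scaler0 //; field.
rewrite (serre_twist (Kinv_rf o1 h21) K1_01' K0_12 (Kinv_rf o0 h10) (Kinv_comm q z o1 o0)).
by rewrite (serre_eq0_scale (l := q ^- 2) c21) ?mul0r ?scaler0 //; field.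
Qed.
End ChevalleyGenerators.

Section Generation.
Variables (k : fieldType) (N : nat) (q z : k) (s : bf k N).
Hypotheses (q0 : q != 0) (q2 : q ^+ 2 != 1) (zN : z ^+ N = q^-1).
Hypotheses (skew : skew_pairing s) (desc : descends q s) (sgen : sigma_gen q z s).
Local Notation dual := (dual k N).
Local Notation lf i j := (lfun s i j : dual).
Local Notation rf i j := (rfun s i j : dual).
Local Notation K := (@K _ N q z).
Local Notation Kinv := (@Kinv _ N q z).

Lemma qdiff_neq0 : q - q^-1 != 0.
Proof.
apply: contraNneq q2 => /eqP; rewrite subr_eq0 => /eqP qq.
by rewrite expr2 {1}qq mulVf.
Qed.

Variable G : dual -> Prop.
Hypotheses (GK : forall i, G (K i)) (GKinv : forall i, G (Kinv i)).

Lemma sigL_sum (x : lincomb k N) : sigL s x = \sum_(p <- x) p.1 *: sL s p.2 :> dual.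
Proof.
apply: funext => w; rewrite /sigL; elim: x => [|p x IH]; rewrite ?big_nil //.
by rewrite !big_cons dual_addE IH.
Qed.

Lemma sigR_sum (x : lincomb k N) : sigR s x = \sum_(p <- x) p.1 *: sR s p.2 :> dual.
Proof.
apply: funext => w; rewrite /sigR; elim: x => [|p x IH]; rewrite ?big_nil //.
by rewrite !big_cons dual_addE IH.
Qed.

Section Left.
Hypothesis GE : forall a b : 'I_N, (a : nat) = b.+1 -> G (Eroot q z s a b).

(* For a > b + 1, the relation of the minor on rows b + 1 < a and columns b < b + 1
   writes l_ab K_(b+1) as a commutator of entries closer to the diagonal. *)
Lemma lfun_gen_by (a b : 'I_N) : gen_by G (lf a b).
Proof.
move: {2}(a - b)%N (leqnn (a - b)) => d; elim: d a b => [|d IH] a b hd.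
  case: (ltngtP a b) => [ab|ba|/ord_inj ->].
  - by rewrite (lfun_upper0 skew sgen ab); apply: gen_by0.
  - by move: hd; rewrite leqn0 subn_eq0 leqNgt ba.
  - by rewrite (lfun_diag skew sgen); apply: gen_by_mem.
have [|ab] := leqP (a - b) d; first exact: IH.
have ba : (b < a)%N by rewrite -subn_gt0 (leq_ltn_trans _ ab).
have [a_b1|a_b1] := eqVneq (a : nat) b.+1.
  have -> : lf a b = K a * Eroot q z s a b by rewrite /Eroot mulrA K_Kinv // mul1r.
  by apply: gen_byM; apply: gen_by_mem; [apply: GK | apply: GE].
have b1a : (b.+1 < a)%N by rewrite ltn_neqAle eq_sym a_b1.
pose c : 'I_N := Ordinal (ltn_trans b1a (ltn_ord a)).
have bc : (b < c)%N := ltnSn b.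
have ca : (c < a)%N := b1a.
have -> : lf a b = (q - q^-1)^-1 *: (lf c b * lf a c - lf a c * lf c b) * Kinv c.
  rewrite (lfun_ad_rel skew desc ca bc) (lfun_diag skew sgen).
  by rewrite scalerA mulVf ?qdiff_neq0 // scale1r -mulrA K_Kinv // mulr1.
apply/gen_byM/gen_by_mem/GKinv; apply/gen_byZ/gen_byB; apply: gen_byM; apply: IH => /=; lia.
Qed.

Lemma sL_gen_by u : gen_by G (sL s u).
Proof.
elim: u => [|[a b] u IH]; first by rewrite sL_nil //; apply: gen_by1.
by rewrite -cat1s sL_cat //; apply: gen_byM => //; apply: lfun_gen_by.
Qed.

Lemma image_sigL_gen_by : (forall g, G g -> in_span (sL s) g) ->
  forall f : fn k N, (exists x, f =1 sigL s x) <-> gen_by G f.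
Proof.
move=> GHl f; have sL_mul u v : sL s u * sL s v = sL s (v ++ u) by rewrite sL_cat.
split=> [[x /funext ->] | /(gen_by_in_span (sL_nil skew) sL_mul GHl) [x ->]].
  by apply: (in_span_gen_by sL_gen_by); exists x; apply: sigL_sum.
by exists x => w; rewrite sigL_sum.
Qed.
End Left.

Section Right.
Hypothesis GF : forall a b : 'I_N, (a : nat) = b.+1 -> G (Froot q z s a b).

Lemma rfun_gen_by (a b : 'I_N) : gen_by G (rf a b).
Proof.
move: {2}(b - a)%N (leqnn (b - a)) => d; elim: d a b => [|d IH] a b hd.
  case: (ltngtP a b) => [ab|ba|/ord_inj ->].
  - by move: hd; rewrite leqn0 subn_eq0 leqNgt ab.
  - by rewrite (rfun_lower0 skew sgen ba); apply: gen_by0.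
  - by rewrite (rfun_diag skew sgen); apply: gen_by_mem.
have [|ab] := leqP (b - a) d; first exact: IH.
have ab' : (a < b)%N by rewrite -subn_gt0 (leq_ltn_trans _ ab).
have qq0 : (q - q^-1) ^- 2 != 0 by rewrite invr_eq0 expf_neq0 ?qdiff_neq0.
have [b_a1|b_a1] := eqVneq (b : nat) a.+1.
  have -> : rf a b = ((q - q^-1) ^- 2)^-1 *: (K a * Froot q z s b a).
    by rewrite /Froot -scalerAr scalerA mulVf // scale1r mulrA K_Kinv // mul1r.
  by apply/gen_byZ/gen_byM; apply: gen_by_mem; [apply: GK | apply: GF].
have a1b : (a.+1 < b)%N by rewrite ltn_neqAle eq_sym b_a1.
pose c : 'I_N := Ordinal (ltn_trans a1b (ltn_ord b)).
have ac : (a < c)%N := ltnSn a.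
have cb : (c < b)%N := a1b.
have -> : rf a b = (q - q^-1)^-1 *: (rf c b * rf a c - rf a c * rf c b) * Kinv c.
  rewrite (rfun_ad_rel skew desc ac cb) (rfun_diag skew sgen).
  by rewrite scalerA mulVf ?qdiff_neq0 // scale1r -mulrA K_Kinv // mulr1.
apply/gen_byM/gen_by_mem/GKinv; apply/gen_byZ/gen_byB; apply: gen_byM; apply: IH => /=; lia.
Qed.

Lemma sR_gen_by u : gen_by G (sR s u).
Proof.
elim: u => [|[a b] u IH]; first by rewrite sR_nil //; apply: gen_by1.
by rewrite -cat1s sR_cat //; apply: gen_byM => //; apply: rfun_gen_by.
Qed.

Lemma image_sigR_gen_by : (forall g, G g -> in_span (sR s) g) ->
  forall f : fn k N, (exists x, f =1 sigR s x) <-> gen_by G f.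
Proof.
move=> GHr f; have sR_mul u v : sR s u * sR s v = sR s (u ++ v) by rewrite sR_cat.
split=> [[x /funext ->] | /(gen_by_in_span (sR_nil skew) sR_mul GHr) [x ->]].
  by apply: (in_span_gen_by sR_gen_by); exists x; apply: sigR_sum.
by exists x => w; rewrite sigR_sum.
Qed.
End Right.
End Generation.

Lemma serre_convprod_eq0 (k : fieldType) (N : nat) (c : k) (X Y : dual k N) :
  serre 1 c 1 X Y = 0 -> forall w,
  convprod [:: X; X; Y] w - c * convprod [:: X; Y; X] w + convprod [:: Y; X; X] w = 0.
Proof. by move=> e w; rewrite !convprod3 -[RHS](congr1 (fun f => f w) e) /serre !scale1r. Qed.

Section SLq.
Variables (k : fieldType) (n : nat) (q z : k) (s : bf k n.+2).
Local Notation N := n.+2.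
Hypotheses (q0 : q != 0) (q2 : q ^+ 2 != 1) (zN : z ^+ N = q^-1).
Hypotheses (skew : skew_pairing s) (desc : descends q s) (sgen : sigma_gen q z s).
Local Notation dual := (dual k N).
Local Notation Kinv := (@Kinv _ N q z).

Definition lo (t : 'I_n.+1) : 'I_N := inord t.
Definition hi (t : 'I_n.+1) : 'I_N := inord t.+1.

Lemma lo_val t : (lo t : nat) = t.
Proof. by rewrite inordK // (leq_trans (ltn_ord t)). Qed.
Lemma hi_val t : (hi t : nat) = t.+1.
Proof. by rewrite inordK // ltnS. Qed.
Lemma hi_lo t : (hi t : nat) = (lo t).+1.
Proof. by rewrite hi_val lo_val. Qed.
Lemma lo_succ (x y : 'I_n.+1) : (y : nat) = x.+1 -> lo y = hi x.
Proof. by move=> yx; apply: val_inj; rewrite /= lo_val hi_val. Qed.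

Definition E (t : 'I_n.+1) : dual := Eroot q z s (hi t) (lo t).
Definition F (t : 'I_n.+1) : dual := Froot q z s (hi t) (lo t).

Lemma K_grouplike_unit i :
  finite_dual q (lfun s i i) /\ grouplike (lfun s i i) /\ finite_dual q (Kinv i) /\
  conv (lfun s i i) (Kinv i) =1 eps /\ conv (Kinv i) (lfun s i i) =1 eps.
Proof.
have lK : lfun s i i = K q z i := lfun_diag skew sgen i.
have gK : grouplike (lfun s i i) by rewrite lK; apply: diagchar_grouplike.
split; first exact: grouplike_finite_dual (desc.1 _) gK.
split=> //; split.
  apply: grouplike_finite_dual (diagchar_grouplike _).
  by rewrite -/(Kinv i) (Kinv_sL q0 zN skew sgen); apply: desc.1.
by split=> w; rewrite -dual_mulE lK ?K_Kinv ?Kinv_K.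
Qed.

Lemma lfun_diag_comm i j : conv (lfun s i i) (lfun s j j) =1 conv (lfun s j j) (lfun s i i).
Proof. by move=> w; rewrite -!dual_mulE !(lfun_diag skew sgen) K_comm. Qed.

Lemma convprod_lfun_diag : convprod [seq lfun s i i | i <- enum 'I_N] =1 eps.
Proof.
by move=> w; rewrite (eq_map (fun i => lfun_diag skew sgen i)) (convprod_K q0 zN).
Qed.

Lemma E_conj i t : convprod [:: lfun s i i; E t; Kinv i] =1
  (fun w => q ^ ((i == inord t :> 'I_N)%:Z - (i == inord t.+1 :> 'I_N)%:Z) * E t w).
Proof.
move=> w; rewrite convprod3 (lfun_diag skew sgen).
by rewrite (K_Eroot_conj q0 zN skew desc sgen _ (hi_lo t)).
Qed.

Lemma F_conj i t : convprod [:: lfun s i i; F t; Kinv i] =1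
  (fun w => q ^ ((i == inord t.+1 :> 'I_N)%:Z - (i == inord t :> 'I_N)%:Z) * F t w).
Proof.
move=> w; rewrite convprod3 (lfun_diag skew sgen).
by rewrite (K_Froot_conj q0 zN skew desc sgen _ (hi_lo t)).
Qed.

Lemma E_comm (x y : 'I_n.+1) : (x.+1 < y)%N || (y.+1 < x)%N -> conv (E y) (E x) =1 conv (E x) (E y).
Proof.
have comm := Eroot_comm q0 zN skew desc sgen.
move=> /orP[] lt w; rewrite -!dual_mulE /E; first by rewrite comm ?hi_lo ?hi_val ?lo_val.
by rewrite -comm ?hi_lo ?hi_val ?lo_val.
Qed.

Lemma F_comm (x y : 'I_n.+1) : (x.+1 < y)%N || (y.+1 < x)%N -> conv (F y) (F x) =1 conv (F x) (F y).
Proof.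
have comm := Froot_comm q0 zN skew desc sgen.
move=> /orP[] lt w; rewrite -!dual_mulE /F; first by rewrite comm ?hi_lo ?hi_val ?lo_val.
by rewrite -comm ?hi_lo ?hi_val ?lo_val.
Qed.

Lemma E_serre (x y : 'I_n.+1) : (x.+1 == y)%N || (y.+1 == x)%N -> forall w,
  convprod [:: E x; E x; E y] w - (q + q^-1) * convprod [:: E x; E y; E x] w
  + convprod [:: E y; E x; E x] w = 0.
Proof.
have Eserre := Eroot_serre q0 zN skew desc sgen.
move=> /orP[/eqP yx | /eqP xy]; apply: serre_convprod_eq0; rewrite /E.
  by rewrite (lo_succ (esym yx)); apply: (Eserre _ _ _ (hi_lo x) _).1; rewrite !hi_val yx.
by rewrite (lo_succ (esym xy)); apply: (Eserre _ _ _ (hi_lo y) _).2; rewrite !hi_val xy.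
Qed.

Lemma F_serre (x y : 'I_n.+1) : (x.+1 == y)%N || (y.+1 == x)%N -> forall w,
  convprod [:: F x; F x; F y] w - (q + q^-1) * convprod [:: F x; F y; F x] w
  + convprod [:: F y; F x; F x] w = 0.
Proof.
have Fserre := Froot_serre q0 zN skew desc sgen.
move=> /orP[/eqP yx | /eqP xy]; apply: serre_convprod_eq0; rewrite /F.
  by rewrite (lo_succ (esym yx)); apply: (Fserre _ _ _ (hi_lo x) _).1; rewrite !hi_val yx.
by rewrite (lo_succ (esym xy)); apply: (Fserre _ _ _ (hi_lo y) _).2; rewrite !hi_val xy.
Qed.

Lemma E_of_root (a b : 'I_N) : (a : nat) = b.+1 -> exists t, E t = Eroot q z s a b.
Proof.
move=> ab; have bn : (b < n.+1)%N by rewrite -ltnS -ab.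
exists (Ordinal bn); rewrite /E; congr Eroot; apply: val_inj; rewrite /= ?hi_val ?lo_val //.
Qed.

Lemma Hl_generated (f : fn k N) : (exists x, f =1 sigL s x) <->
  gen_by (fun g => (exists i, g =1 lfun s i i \/ g =1 Kinv i) \/ exists t, g =1 E t) f.
Proof.
apply: (image_sigL_gen_by q0 q2 zN skew desc sgen) => [i|i|a b /E_of_root[t Et]|g].
- by left; exists i; left => w; rewrite (lfun_diag skew sgen).
- by left; exists i; right.
- by right; exists t; rewrite Et.
case=> [[i [/funext-> | /funext->]] | [t /funext->]].
- exact: (in_span_phi (sL s) [:: (i, i)]).
- by rewrite (Kinv_sL q0 zN skew sgen); apply: in_span_phi.
rewrite /E /Eroot (Kinv_sL q0 zN skew sgen) -[lfun s _ _]/(sL s [:: _]) -sL_cat //.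
exact: in_span_phi.
Qed.

Lemma F_of_root (a b : 'I_N) : (a : nat) = b.+1 -> exists t, F t = Froot q z s a b.
Proof.
move=> ab; have bn : (b < n.+1)%N by rewrite -ltnS -ab.
exists (Ordinal bn); rewrite /F; congr Froot; apply: val_inj; rewrite /= ?hi_val ?lo_val //.
Qed.

Lemma Hr_generated (f : fn k N) : (exists x, f =1 sigR s x) <->
  gen_by (fun g => (exists i, g =1 lfun s i i \/ g =1 Kinv i) \/ exists t, g =1 F t) f.
Proof.
apply: (image_sigR_gen_by q0 q2 zN skew desc sgen) => [i|i|a b /F_of_root[t Ft]|g].
- by left; exists i; left => w; rewrite (lfun_diag skew sgen).
- by left; exists i; right.
- by right; exists t; rewrite Ft.
case=> [[i [/funext-> | /funext->]] | [t /funext->]].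
- rewrite (lfun_diag skew sgen) -(rfun_diag skew sgen).
  exact: (in_span_phi (sR s) [:: (i, i)]).
- by rewrite (Kinv_sR q0 zN skew sgen); apply: in_span_phi.
rewrite /F /Froot (Kinv_sR q0 zN skew sgen) -[rfun s _ _]/(sR s [:: _]) -sR_cat //.
exact: in_span_phiZ.
Qed.
End SLq.

Theorem proposition4p3 (k : fieldType) (n : nat) (q z : k)
    (sigma : word n.+2 -> word n.+2 -> k) :
  q != 0 -> q ^+ 2 != 1 -> z ^+ n.+2 = q^-1 -> CQT q z sigma ->
  (forall i : 'I_n.+2, lfun sigma i i =1 rfun sigma i i) /\
  exists Kinv : 'I_n.+2 -> fn k n.+2,
    let K (i : 'I_n.+2) := lfun sigma i i in
    let E (s : 'I_n.+1) : fn k n.+2 :=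
      conv (Kinv (inord s.+1)) (lfun sigma (inord s.+1) (inord s)) in
    let F (s : 'I_n.+1) : fn k n.+2 := fun w =>
      (q - q^-1) ^- 2 * conv (Kinv (inord s)) (rfun sigma (inord s) (inord s.+1)) w in
    (forall i, finite_dual q (K i) /\ grouplike (K i) /\ finite_dual q (Kinv i) /\
               conv (K i) (Kinv i) =1 eps /\ conv (Kinv i) (K i) =1 eps) /\
    (forall f : fn k n.+2, (exists x, f =1 sigL sigma x) <->
       gen_by (fun g => (exists i, g =1 K i \/ g =1 Kinv i) \/ exists s, g =1 E s) f) /\
    (forall f : fn k n.+2, (exists x, f =1 sigR sigma x) <->
       gen_by (fun g => (exists i, g =1 K i \/ g =1 Kinv i) \/ exists s, g =1 F s) f) /\
    (forall i j, conv (K i) (K j) =1 conv (K j) (K i)) /\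
    convprod [seq K i | i <- enum 'I_n.+2] =1 eps /\
    (forall (i : 'I_n.+2) (t : 'I_n.+1), convprod [:: K i; E t; Kinv i] =1
       (fun w => q ^ ((i == inord t :> 'I_n.+2)%:Z - (i == inord t.+1 :> 'I_n.+2)%:Z)
                 * E t w)) /\
    (forall s t : 'I_n.+1, (s.+1 < t)%N || (t.+1 < s)%N ->
       conv (E t) (E s) =1 conv (E s) (E t)) /\
    (forall s t : 'I_n.+1, (s.+1 == t)%N || (t.+1 == s)%N -> forall w,
       convprod [:: E s; E s; E t] w - (q + q^-1) * convprod [:: E s; E t; E s] w
       + convprod [:: E t; E s; E s] w = 0) /\
    (forall (i : 'I_n.+2) (t : 'I_n.+1), convprod [:: K i; F t; Kinv i] =1
       (fun w => q ^ ((i == inord t.+1 :> 'I_n.+2)%:Z - (i == inord t :> 'I_n.+2)%:Z)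
                 * F t w)) /\
    (forall s t : 'I_n.+1, (s.+1 < t)%N || (t.+1 < s)%N ->
       conv (F t) (F s) =1 conv (F s) (F t)) /\
    (forall s t : 'I_n.+1, (s.+1 == t)%N || (t.+1 == s)%N -> forall w,
       convprod [:: F s; F s; F t] w - (q + q^-1) * convprod [:: F s; F t; F s] w
       + convprod [:: F t; F s; F s] w = 0).
Proof.
move=> q0 q2 zN [desc [skew [_ [_ sgen]]]].
split=> [i w|]; first by rewrite (lfun_diag skew sgen) (rfun_diag skew sgen).
exists (Kinv q z) => K E F.
split; first exact: (K_grouplike_unit q0 zN skew desc sgen).
split; first exact: (Hl_generated q0 q2 zN skew desc sgen).
split; first exact: (Hr_generated q0 q2 zN skew desc sgen).
split; first exact: (lfun_diag_comm skew sgen).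
split; first exact: (convprod_lfun_diag q0 zN skew sgen).
split; first exact: (E_conj q0 zN skew desc sgen).
split; first exact: (E_comm q0 zN skew desc sgen).
split; first exact: (E_serre q0 zN skew desc sgen).
split; first exact: (F_conj q0 zN skew desc sgen).
split; first exact: (F_comm q0 zN skew desc sgen).
exact: (F_serre q0 zN skew desc sgen).
Qed.
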